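(* Let $n\ge 3$ be an integer, $t\in(0,1)$, and let $l$ range over non-negative integers. (1) For $0<\alpha<n$, the quantity $\frac{\Gamma(l+\frac{n-\alpha}2)^2}{\Gamma(l+\frac n2)^2}F\big(l+\frac{n+\alpha}2-1,\frac\alpha2;l+\frac n2;t\big)^2$ is strictly decreasing in $l$. (2) For $\alpha\le0$, the quantity $\frac{\Gamma(l+\frac{n-\alpha}2)^2}{\Gamma(l+\frac n2)^2}t^l F\big(l+\frac{n+\alpha}2-1,\frac\alpha2;l+\frac n2;t\big)^2$ is strictly decreasing in $l$.
   Context: $F(a,b;c;z)=\sum_{r\ge0}\frac{(a)_r(b)_r}{(c)_r}\frac{z^r}{r!}$ for $|z|<1$ is the Gauss hypergeometric function, where $(a)_0=1$ and $(a)_r=a(a+1)\cdots(a+r-1)$. *)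

From Stdlib Require Import Reals Factorial.
From Coquelicot Require Import Coquelicot.
Open Scope R_scope.

Fixpoint poch (a : R) (r : nat) : R :=
  match r with
  | O => 1
  | S k => poch a k * (a + INR k)
  end.

Definition hyp2F1 (a b c z : R) : R :=
  Series (fun r => poch a r * poch b r / poch c r * z ^ r / INR (fact r)).

Definition Gamma (x : R) : R :=
  RInt_gen (fun s => Rpower s (x - 1) * exp (- s)) (at_right 0) (Rbar_locally p_infty).

(** Write [c = l + n/2] and [b = alpha/2].  By [Gamma (x + 1) = x Gamma x],
    consecutive terms decrease as soon as
    [(c - b)^2 F(c+b, b; c+1; t)^2 < c^2 F(c+b-1, b; c; t)^2],
    with an extra factor [t] on the left in part (2).  For [b >= 1/2] both series have
    positive coefficients, which compare termwise by the contiguous relation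
    [(a+1)_r / (c+1)_r * a (c+r) = (a)_r / (c)_r * c (a+r)].  Otherwise Euler's
    transformation [F(a,b;c;t) = (1-t)^(c-a-b) F(c-a,c-b;c;t)] turns both sides into series
    with positive coefficients.  For [0 < b < 1] these again compare termwise.  For [b <= 0],
    write [c F(c-b,1-b;c;t) = c sum p_r t^r] and [(c-b) F(c-b+1,1-b;c+1;t) = c sum w_r t^r];
    then [w_r^2 <= p_r p_(r+1)], and AM-GM summed over [r] gives
    [sqrt t * sum w_r t^r <= sum p_r t^r - 1/2].  Euler's transformation follows from the
    hypergeometric differential equation, the recurrence of [Gamma] from integration by
    parts. *)

From Stdlib Require Import Reals Factorial Lra Lia Psatz.
From Coquelicot Require Import Coquelicot.
Open Scope R_scope.

(** * Power series and a first-order ODE *)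

Lemma pow2_lt_compat x y : 0 <= x < y -> x ^ 2 < y ^ 2.
Proof. intro H. nra. Qed.

Lemma two_mul_le_of_sq_le x w p p' : 0 <= x -> 0 <= w -> 0 <= p -> 0 <= p' ->
  w ^ 2 <= p * p' -> 2 * x * w <= p + p' * x ^ 2.
Proof.
  intros Hx Hw Hp Hp' Hwp.
  assert (0 <= (p - p' * x ^ 2) ^ 2) by apply pow2_ge_0.
  assert (0 <= x ^ 2 * (p * p' - w ^ 2)) by (apply Rmult_le_pos; nra).
  apply Rsqr_incr_0_var; [unfold Rsqr; nra | nra].
Qed.

Lemma sum_f_R0_ge_term (f : nat -> R) N k :
  (forall i, 0 <= f i) -> (k <= N)%nat -> f k <= sum_f_R0 f N.
Proof.
  intros Hf. induction N as [|N IH]; intro Hk.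
  - replace k with 0%nat by lia. simpl. lra.
  - simpl. destruct (Nat.eq_dec k (S N)) as [->|Hne].
    + pose proof (cond_pos_sum f N Hf). lra.
    + specialize (IH ltac:(lia)). specialize (Hf (S N)). lra.
Qed.

(* A discrete ratio test: [|a n| y^n] is eventually non-increasing, hence bounded. *)
Lemma CV_radius_ge_of_ratio (a : nat -> R) (y : R) (N : nat) : 0 < y ->
  (forall n, (N <= n)%nat -> Rabs (a (S n)) * y <= Rabs (a n)) ->
  Rbar_le y (CV_radius a).
Proof.
  intros Hy Hratio.
  set (M := sum_f_R0 (fun k => Rabs (a k * y ^ k)) N).
  assert (Hbound : forall n, Rabs (a n * y ^ n) <= M).
  { induction n as [|n IH].
    - apply (sum_f_R0_ge_term (fun k => Rabs (a k * y ^ k))); [intro; apply Rabs_pos | lia].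
    - destruct (Compare_dec.le_lt_dec (S n) N) as [Hn|Hn].
      + apply (sum_f_R0_ge_term (fun k => Rabs (a k * y ^ k))); [intro; apply Rabs_pos | lia].
      + specialize (Hratio n ltac:(lia)).
        rewrite Rabs_mult in IH |- *. simpl pow. rewrite Rabs_mult, (Rabs_right y) by lra.
        pose proof (Rabs_pos (y ^ n)). nra. }
  apply (proj1 (CV_radius_bounded a)). exists M. exact Hbound.
Qed.

Lemma ex_series_PSeries (a : nat -> R) t : Rbar_lt (Rabs t) (CV_radius a) ->
  ex_series (fun k => a k * t ^ k).
Proof.
  intro H. eapply ex_series_ext; [|exact (CV_radius_inside a t H)].
  intro k. simpl. rewrite pow_n_pow. apply Rmult_comm.
Qed.

Lemma PSeries_lt_termwise (u v : nat -> R) t : 0 <= t ->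
  Rbar_lt (Rabs t) (CV_radius v) ->
  (forall r, 0 <= u r <= v r) -> u 0%nat < v 0%nat -> PSeries u t < PSeries v t.
Proof.
  intros Ht Hv Huv H0.
  assert (Hle : forall k, 0 <= u k * t ^ k <= v k * t ^ k).
  { intro k. pose proof (pow_le t k Ht). specialize (Huv k). split; nra. }
  pose proof (ex_series_PSeries v t Hv) as Hev.
  assert (Heu : ex_series (fun k => u k * t ^ k)).
  { apply (@ex_series_le R_AbsRing R_CompleteNormedModule _ (fun k => v k * t ^ k)); auto.
    intro k. change (Rabs (u k * t ^ k) <= v k * t ^ k).
    specialize (Hle k). rewrite Rabs_right; lra. }
  unfold PSeries.
  rewrite (Series_incr_1 (fun k => u k * t ^ k)), (Series_incr_1 (fun k => v k * t ^ k)) by auto.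
  pose proof (Series_le (fun k => u (S k) * t ^ S k) (fun k => v (S k) * t ^ S k)
    (fun k => Hle (S k)) (proj1 (ex_series_incr_1 _) Hev)).
  simpl pow in *. lra.
Qed.

Lemma PSeries_pos (v : nat -> R) t : 0 <= t -> Rbar_lt (Rabs t) (CV_radius v) ->
  (forall r, 0 <= v r) -> 0 < v 0%nat -> 0 < PSeries v t.
Proof.
  intros. rewrite <- (PSeries_const_0 t). apply PSeries_lt_termwise; auto.
  intro r; split; auto; lra.
Qed.

(* Termwise AM-GM, [2 x w_k x^(2k) <= p_k x^(2k) + p_(k+1) x^(2k+2)], summed over [k]:
   the right-hand sides add up to [2 P(x^2) - p_0]. *)
Lemma PSeries_interlaced_le (p w : nat -> R) x : 0 <= x ->
  Rbar_lt (Rabs (x ^ 2)) (CV_radius p) ->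
  (forall k, 0 <= p k) -> (forall k, 0 <= w k) -> (forall k, w k ^ 2 <= p k * p (S k)) ->
  x * PSeries w (x ^ 2) <= PSeries p (x ^ 2) - p 0%nat / 2.
Proof.
  intros Hx Hr Hp Hw Hwp.
  set (t := x ^ 2) in *.
  pose proof (ex_series_PSeries p t Hr) as Hex.
  pose proof (proj1 (ex_series_incr_1 _) Hex) as Hex1. cbv beta in Hex1.
  pose proof (@ex_series_scal_l R_AbsRing R_NormedModule (/ 2) _ Hex) as Hex'.
  pose proof (@ex_series_scal_l R_AbsRing R_NormedModule (/ 2) _ Hex1) as Hex1'.
  set (bnd k := / 2 * (p k * t ^ k) + / 2 * (p (S k) * t ^ S k)).
  assert (Hsum : Series bnd = PSeries p t - p 0%nat / 2).
  { unfold bnd. rewrite Series_plus by assumption. rewrite !Series_scal_l.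
    unfold PSeries. rewrite (Series_incr_1 (fun k => p k * t ^ k)) by assumption.
    simpl. field. }
  rewrite <- Hsum. unfold PSeries. rewrite <- Series_scal_l. apply Series_le.
  - intro k. pose proof (pow_le t k ltac:(unfold t; nra)) as Htk. split.
    + apply Rmult_le_pos; [lra|]. apply Rmult_le_pos; auto.
    + pose proof (two_mul_le_of_sq_le x (w k) (p k) (p (S k)) Hx (Hw k) (Hp k) (Hp (S k)) (Hwp k)).
      assert (2 * x * w k * t ^ k <= (p k + p (S k) * t) * t ^ k)
        by (apply Rmult_le_compat_r; auto).
      unfold bnd. simpl pow. lra.
  - exact (@ex_series_plus R_AbsRing R_NormedModule _ _ Hex' Hex1').
Qed.

Lemma is_derive_eq (f : R -> R) x (l l' : R) : is_derive f x l -> @eq R l l' -> is_derive f x l'.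
Proof. intros H <-; exact H. Qed.

Lemma is_derive_Rpower_base v c : 0 < v -> is_derive (fun w => Rpower w c) v (c * Rpower v (c - 1)).
Proof. intro Hv. apply is_derive_Reals, derivable_pt_lim_power, Hv. Qed.

(* [v^c f(v)] is constant on [(0, u]] and tends to [0] at [0+]. *)
Lemma Euler_ode_solution_zero (f f' : R -> R) (c u : R) : 0 < c -> 0 < u ->
  (forall v, 0 < v <= u -> is_derive f v (f' v)) ->
  (forall v, 0 < v <= u -> v * f' v + c * f v = 0) ->
  continuous f 0 -> f 0 = 0 -> f u = 0.
Proof.
  intros Hc Hu Hd Hode Hcont H0.
  set (Y v := Rpower v c * f v).
  assert (HY : forall e, 0 < e <= u -> Y e = Y u).
  { intros e He. destruct (Req_dec e u) as [->|Hne]; auto.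
    apply eq_is_derive; [|lra]. intros v Hv.
    pose proof (is_derive_mult _ _ v _ _ (is_derive_Rpower_base v c ltac:(lra))
                  (Hd v ltac:(lra)) Rmult_comm) as HYd.
    apply (is_derive_eq _ _ _ _ HYd). unfold plus, mult; simpl.
    replace (Rpower v c) with (Rpower v (c - 1) * v)
      by (rewrite <- (Rpower_1 v) at 2 by lra; rewrite <- Rpower_plus; f_equal; ring).
    transitivity (Rpower v (c - 1) * (v * f' v + c * f v)); [ring|].
    rewrite Hode by lra. change (@zero R_NormedModule) with 0. ring. }
  destruct (Req_dec (f u) 0) as [|Hfu]; auto. exfalso.
  assert (HYu : 0 < Rabs (Y u)).
  { apply Rabs_pos_lt, Rmult_integral_contrapositive. split; auto. apply Rgt_not_eq, exp_pos. }
  destruct (proj1 (filterlim_locally f (f 0)) Hcont (mkposreal _ HYu)) as [d Hball].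
  pose proof (cond_pos d).
  pose proof (Rmin_l (d / 2) (Rmin u (1 / 2))). pose proof (Rmin_r (d / 2) (Rmin u (1 / 2))).
  pose proof (Rmin_l u (1 / 2)). pose proof (Rmin_r u (1 / 2)).
  assert (He : 0 < Rmin (d / 2) (Rmin u (1 / 2))) by (repeat apply Rmin_pos; lra).
  set (e := Rmin (d / 2) (Rmin u (1 / 2))) in *.
  assert (Hfe : Rabs (f e) < Rabs (Y u)).
  { rewrite <- (Rminus_0_r (f e)), <- H0. apply (Hball e).
    change (Rabs (e - 0) < d). rewrite Rminus_0_r, Rabs_right; lra. }
  assert (Hpe : 0 < Rpower e c < 1).
  { split; [apply exp_pos|]. unfold Rpower. rewrite <- exp_0. apply exp_increasing.
    assert (ln e < 0) by (rewrite <- ln_1; apply ln_increasing; lra). nra. }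
  rewrite <- (HY e ltac:(lra)) in Hfe. unfold Y in Hfe.
  rewrite Rabs_mult, (Rabs_right (Rpower e c)) in Hfe by lra.
  pose proof (Rabs_pos (f e)). nra.
Qed.

(** * Hypergeometric series *)

Definition hypcoef (a b c : R) (r : nat) : R :=
  poch a r * poch b r / poch c r / INR (fact r).

Lemma hyp2F1_PSeries a b c z : hyp2F1 a b c z = PSeries (hypcoef a b c) z.
Proof.
  unfold hyp2F1, PSeries. apply Series_ext. intro r. unfold hypcoef, Rdiv. ring.
Qed.

Lemma hyp2F1_sym a b c z : hyp2F1 a b c z = hyp2F1 b a c z.
Proof. apply Series_ext; intro r. f_equal; f_equal; f_equal; ring. Qed.

Lemma poch_pos a r : 0 < a -> 0 < poch a r.
Proof.
  intro Ha; induction r as [|r IH]; simpl; [lra|].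
  apply Rmult_lt_0_compat; auto. pose proof (pos_INR r); lra.
Qed.

Lemma poch_shift a r : poch (a + 1) r * a = poch a r * (a + INR r).
Proof.
  induction r as [|r IH]; [simpl; ring|].
  cbn [poch]. rewrite S_INR.
  transitivity (poch (a + 1) r * a * (a + 1 + INR r)); [ring|].
  rewrite IH; ring.
Qed.

Lemma hypcoef_0 a b c : hypcoef a b c 0 = 1.
Proof. unfold hypcoef; simpl; field. Qed.

Lemma hypcoef_S a b c r : 0 < c ->
  hypcoef a b c (S r) = hypcoef a b c r * ((a + INR r) * (b + INR r) / ((c + INR r) * (INR r + 1))).
Proof.
  intro Hc. unfold hypcoef. simpl poch.
  rewrite fact_simpl, mult_INR, S_INR.
  pose proof (poch_pos c r Hc). pose proof (lt_0_INR _ (lt_O_fact r)). pose proof (pos_INR r).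
  field. repeat split; lra.
Qed.

Lemma hypcoef_pos a b c r : 0 < a -> 0 < b -> 0 < c -> 0 < hypcoef a b c r.
Proof.
  intros Ha Hb Hc. unfold hypcoef.
  pose proof (poch_pos a r Ha). pose proof (poch_pos b r Hb). pose proof (poch_pos c r Hc).
  pose proof (lt_0_INR _ (lt_O_fact r)).
  apply Rdiv_lt_0_compat; [apply Rdiv_lt_0_compat|]; nra.
Qed.

Lemma hypcoef_contiguous a b c r : 0 < c ->
  hypcoef (a + 1) b (c + 1) r * a * (c + INR r) = hypcoef a b c r * c * (a + INR r).
Proof.
  intro Hc. unfold hypcoef.
  pose proof (poch_pos c r Hc). pose proof (lt_0_INR _ (lt_O_fact r)). pose proof (pos_INR r).
  assert (Ec : poch (c + 1) r = poch c r * (c + INR r) / c).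
  { rewrite <- poch_shift. field. lra. }
  rewrite Ec.
  transitivity (poch (a + 1) r * a * poch b r * c / poch c r / INR (fact r)).
  { field. repeat split; lra. }
  rewrite poch_shift. field. lra.
Qed.

Lemma hypcoef_recurrence a b c r : 0 < c ->
  (INR r + 1) * (c + INR r) * hypcoef a b c (S r) = (a + INR r) * (b + INR r) * hypcoef a b c r.
Proof. intro Hc. rewrite hypcoef_S by lra. pose proof (pos_INR r). field. lra. Qed.

Lemma hypcoef_ratio_eventually a b c y : 0 < c -> 0 < y < 1 ->
  exists N, forall n, (N <= n)%nat ->
    Rabs (hypcoef a b c (S n)) * y <= Rabs (hypcoef a b c n).
Proof.
  intros Hc Hy.
  set (K := Rabs a + Rabs b + 1).
  assert (HK : 1 <= K) by (unfold K; pose proof (Rabs_pos a); pose proof (Rabs_pos b); lra).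
  destruct (is_lim_seq_INR (fun x => Rmax 1 ((K * K + 2 * K) / (1 - y)) < x)) as [N HN].
  { exists (Rmax 1 ((K * K + 2 * K) / (1 - y))). auto. }
  exists N. intros n Hn. specialize (HN n Hn).
  set (x := INR n) in *.
  assert (Hx1 : 1 <= x) by (pose proof (Rmax_l 1 ((K * K + 2 * K) / (1 - y))); lra).
  assert (Hxy : K * K + 2 * K <= (1 - y) * x).
  { pose proof (Rmax_r 1 ((K * K + 2 * K) / (1 - y))).
    assert (H' : (K * K + 2 * K) / (1 - y) <= x) by lra.
    apply Rle_div_l in H'; lra. }
  assert (Ha : Rabs (a + x) <= K + x).
  { pose proof (Rabs_triang a x). rewrite (Rabs_right x) in H by lra.
    unfold K; pose proof (Rabs_pos b); lra. }
  assert (Hb : Rabs (b + x) <= K + x).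
  { pose proof (Rabs_triang b x). rewrite (Rabs_right x) in H by lra.
    unfold K; pose proof (Rabs_pos a); lra. }
  assert (Hq : Rabs ((a + x) * (b + x) / ((c + x) * (x + 1))) * y <= 1).
  { rewrite Rabs_div by nra. rewrite (Rabs_right ((c + x) * (x + 1))), Rabs_mult by nra.
    replace (Rabs (a + x) * Rabs (b + x) / ((c + x) * (x + 1)) * y)
      with (Rabs (a + x) * Rabs (b + x) * y / ((c + x) * (x + 1))) by (field; nra).
    apply Rle_div_l; [nra|].
    assert (Rabs (a + x) * Rabs (b + x) <= (K + x) * (K + x))
      by (apply Rmult_le_compat; auto using Rabs_pos).
    assert ((K + x) * (K + x) * y <= x * x).
    { assert (K * K * y <= K * K * x) by nra. assert (K * x * y <= K * x) by nra. nra. }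
    assert (Rabs (a + x) * Rabs (b + x) * y <= (K + x) * (K + x) * y)
      by (apply Rmult_le_compat_r; lra).
    nra. }
  rewrite hypcoef_S, Rabs_mult by lra. fold x.
  pose proof (Rabs_pos (hypcoef a b c n)). nra.
Qed.

Lemma hypcoef_CV_radius a b c x : 0 < c -> Rabs x < 1 ->
  Rbar_lt (Rabs x) (CV_radius (hypcoef a b c)).
Proof.
  intros Hc Hx. set (y := (Rabs x + 1) / 2).
  assert (Hy : 0 < y < 1) by (unfold y; pose proof (Rabs_pos x); lra).
  destruct (hypcoef_ratio_eventually a b c y Hc Hy) as [N HN].
  pose proof (CV_radius_ge_of_ratio _ y N (proj1 Hy) HN) as Hle.
  destruct (CV_radius (hypcoef a b c)); simpl in *; auto; unfold y in Hle; lra.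
Qed.

Lemma hyp2F1_pos a b c t : 0 < a -> 0 < b -> 0 < c -> 0 <= t < 1 -> 0 < hyp2F1 a b c t.
Proof.
  intros Ha Hb Hc Ht. rewrite hyp2F1_PSeries.
  apply PSeries_pos; [lra | apply hypcoef_CV_radius; [lra | rewrite Rabs_right; lra] | |].
  - intro r; left; apply hypcoef_pos; auto.
  - rewrite hypcoef_0; lra.
Qed.

(* The coefficient of [t^n] in [t (1-t) F'' + (c - (a+b+1) t) F' - a b F]; multiplication
   by [t] is [PS_incr_1]. *)
Lemma hypcoef_ode a b c n : 0 < c ->
  let g := hypcoef a b c in
  let d1 := PS_derive g in
  let d2 := PS_derive d1 in
  PS_incr_1 d2 n - PS_incr_1 (PS_incr_1 d2) n + c * d1 n - (a + b + 1) * PS_incr_1 d1 n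
    - a * b * g n = 0.
Proof.
  intros Hc g d1 d2.
  pose proof (hypcoef_recurrence a b c) as Hrec.
  unfold d2, d1, g, PS_derive, PS_incr_1. change (@zero R_NormedModule) with 0.
  destruct n as [|[|m]].
  - specialize (Hrec 0%nat Hc). simpl in *. lra.
  - specialize (Hrec 1%nat Hc). simpl in *. lra.
  - specialize (Hrec (S (S m)) Hc). rewrite !S_INR in *. lra.
Qed.

Lemma hyp2F1_ode a b c t : 0 < c -> Rabs t < 1 ->
  let g := hypcoef a b c in
  t * (1 - t) * PSeries (PS_derive (PS_derive g)) t
  + (c - (a + b + 1) * t) * PSeries (PS_derive g) t - a * b * PSeries g t = 0.
Proof.
  intros Hc Ht g.
  assert (R0 : Rbar_lt (Rabs t) (CV_radius g)) by (apply hypcoef_CV_radius; auto).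
  assert (R1 : Rbar_lt (Rabs t) (CV_radius (PS_derive g))) by (rewrite CV_radius_derive; auto).
  assert (R2 : Rbar_lt (Rabs t) (CV_radius (PS_derive (PS_derive g))))
    by (rewrite !CV_radius_derive; auto).
  pose proof (PSeries_correct _ _ (CV_radius_inside _ _ R0)) as H0.
  pose proof (PSeries_correct _ _ (CV_radius_inside _ _ R1)) as H1.
  pose proof (PSeries_correct _ _ (CV_radius_inside _ _ R2)) as H2.
  set (G := PSeries g t) in *. set (G1 := PSeries (PS_derive g) t) in *.
  set (G2 := PSeries (PS_derive (PS_derive g)) t) in *.
  assert (Hscal : forall k a l, is_pseries a t l -> is_pseries (PS_scal k a) t (k * l))
    by (intros k a' l H; exact (is_pseries_scal k a' t l (Rmult_comm t k) H)).
  pose proof (is_pseries_plus _ _ _ _ _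
    (is_pseries_plus _ _ _ _ _
      (is_pseries_plus _ _ _ _ _
        (is_pseries_plus _ _ _ _ _ (is_pseries_incr_1 _ _ _ H2)
          (Hscal (-1) _ _ (is_pseries_incr_1 _ _ _ (is_pseries_incr_1 _ _ _ H2))))
        (Hscal c _ _ H1))
      (Hscal (- (a + b + 1)) _ _ (is_pseries_incr_1 _ _ _ H1)))
    (Hscal (- (a * b)) _ _ H0)) as Hsum.
  apply (is_pseries_ext _ (fun _ => 0)) in Hsum.
  2:{ intro n. pose proof (hypcoef_ode a b c n Hc) as E. cbv zeta in E.
      unfold PS_plus, PS_scal, plus, scal; simpl. unfold mult; simpl. fold g in E. lra. }
  apply is_pseries_unique in Hsum. rewrite PSeries_const_0 in Hsum.
  unfold plus, scal in Hsum; simpl in Hsum. unfold mult in Hsum; simpl in Hsum. lra.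
Qed.

(** * Euler's transformation *)

Section Euler_transformation.

Variables a b c : R.
Hypothesis Hc : 0 < c.

Let F := PSeries (hypcoef a b c).
Let F1 := PSeries (PS_derive (hypcoef a b c)).
Let F2 := PSeries (PS_derive (PS_derive (hypcoef a b c))).
Let P := PSeries (hypcoef (c - a) (c - b) c).
Let P1 := PSeries (PS_derive (hypcoef (c - a) (c - b) c)).
Let P2 := PSeries (PS_derive (PS_derive (hypcoef (c - a) (c - b) c))).
Let s := c - a - b.

(* Up to the factor [(1-u)^(-s-1)], [W] is the Wronskian of [(1-u)^(-s) F] and [P]. *)
Let W u := (1 - u) * (F1 u * P u - F u * P1 u) + s * F u * P u.
Let W' u := - (F1 u * P u - F u * P1 u) + (1 - u) * (F2 u * P u - F u * P2 u)
  + s * (F1 u * P u + F u * P1 u).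

Lemma hyp_series_derive a' b' u : Rabs u < 1 ->
  is_derive (PSeries (hypcoef a' b' c)) u (PSeries (PS_derive (hypcoef a' b' c)) u) /\
  is_derive (PSeries (PS_derive (hypcoef a' b' c))) u
    (PSeries (PS_derive (PS_derive (hypcoef a' b' c))) u).
Proof.
  intro Hu.
  split; apply is_derive_PSeries; rewrite ?CV_radius_derive; apply hypcoef_CV_radius; auto.
Qed.

Lemma W_derive u : Rabs u < 1 -> is_derive W u (W' u).
Proof.
  intro Hu.
  destruct (hyp_series_derive a b u Hu) as [dF dF1].
  destruct (hyp_series_derive (c - a) (c - b) u Hu) as [dP dP1].
  unfold W. auto_derive.
  - repeat split; eexists; eassumption.
  - replace (Derive (fun x => F x) u) with (F1 u) by (symmetry; now apply is_derive_unique).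
    replace (Derive (fun x => F1 x) u) with (F2 u) by (symmetry; now apply is_derive_unique).
    replace (Derive (fun x => P x) u) with (P1 u) by (symmetry; now apply is_derive_unique).
    replace (Derive (fun x => P1 x) u) with (P2 u) by (symmetry; now apply is_derive_unique).
    unfold W'. ring.
Qed.

Lemma W_ode u : Rabs u < 1 -> u * W' u + c * W u = 0.
Proof.
  intro Hu.
  pose proof (hyp2F1_ode a b c u Hc Hu) as EF.
  pose proof (hyp2F1_ode (c - a) (c - b) c u Hc Hu) as EP.
  cbv zeta in EF, EP. fold F F1 F2 P P1 P2 in EF, EP.
  transitivity (P u * (u * (1 - u) * F2 u + (c - (a + b + 1) * u) * F1 u - a * b * F u)
    - F u * (u * (1 - u) * P2 u + (c - (c - a + (c - b) + 1) * u) * P1 u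
             - (c - a) * (c - b) * P u)).
  - unfold W, W', s. ring.
  - rewrite EF, EP. ring.
Qed.

Lemma W_0 : W 0 = 0.
Proof.
  unfold W, F, F1, P, P1. rewrite !PSeries_0. unfold PS_derive.
  rewrite (hypcoef_S a b c 0), (hypcoef_S (c - a) (c - b) c 0), !hypcoef_0 by lra.
  unfold s. simpl. field. lra.
Qed.

Lemma W_vanishes u : 0 <= u < 1 -> W u = 0.
Proof.
  intro Hu. destruct (Req_dec u 0) as [->|Hu0]; [apply W_0|].
  apply (Euler_ode_solution_zero W W' c u Hc ltac:(lra)).
  - intros v Hv. apply W_derive. rewrite Rabs_right; lra.
  - intros v Hv. apply W_ode. rewrite Rabs_right; lra.
  - apply (@ex_derive_continuous R_AbsRing R_NormedModule).
    eexists. apply W_derive. rewrite Rabs_R0; lra.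
  - apply W_0.
Qed.

Theorem hyp2F1_Euler t : 0 < c - a -> 0 < c - b -> 0 <= t < 1 ->
  hyp2F1 a b c t = Rpower (1 - t) (c - a - b) * hyp2F1 (c - a) (c - b) c t.
Proof.
  intros Ha Hb Ht.
  assert (HP : forall u, 0 <= u < 1 -> 0 < P u).
  { intros u Hu. unfold P. rewrite <- hyp2F1_PSeries. apply hyp2F1_pos; auto. }
  set (m u := F u * exp (- s * ln (1 - u)) / P u).
  assert (Hm : forall u, 0 <= u <= t -> is_derive m u 0).
  { intros u Hu. assert (Hu' : Rabs u < 1) by (rewrite Rabs_right; lra).
    destruct (hyp_series_derive a b u Hu') as [dF _].
    destruct (hyp_series_derive (c - a) (c - b) u Hu') as [dP _].
    pose proof (HP u ltac:(lra)) as HPu. pose proof (W_vanishes u ltac:(lra)) as HW.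
    unfold m. auto_derive.
    - repeat split; try (eexists; eassumption); lra.
    - replace (Derive (fun x => F x) u) with (F1 u) by (symmetry; now apply is_derive_unique).
      replace (Derive (fun x => P x) u) with (P1 u) by (symmetry; now apply is_derive_unique).
      unfold W in HW.
      transitivity (exp (- s * ln (1 - u)) / (P u * P u * (1 - u))
                    * ((1 - u) * (F1 u * P u - F u * P1 u) + s * F u * P u)).
      + replace (1 + - u) with (1 - u) by ring. field. split; lra.
      + rewrite HW. ring. }
  assert (Em : m t = 1).
  { transitivity (m 0).
    - destruct (Req_dec t 0) as [->|Ht0]; [reflexivity|].
      symmetry. apply eq_is_derive; [exact Hm | lra].
    - unfold m, F, P. rewrite Rminus_0_r, ln_1, Rmult_0_r, exp_0, !PSeries_0, !hypcoef_0. field. }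
  pose proof (HP t Ht) as HPt.
  rewrite !hyp2F1_PSeries. change (F t = exp (s * ln (1 - t)) * P t).
  transitivity (m t * (exp (s * ln (1 - t)) * P t)); [|rewrite Em; ring].
  unfold m. transitivity (F t * (exp (- s * ln (1 - t)) * exp (s * ln (1 - t)))).
  - rewrite <- exp_plus. replace (- s * ln (1 - t) + s * ln (1 - t)) with 0 by ring.
    rewrite exp_0. ring.
  - field. lra.
Qed.

End Euler_transformation.

(** * Comparison of contiguous functions *)

Lemma hyp2F1_Euler_contiguous c b t : 0 < c -> b < 1 -> b < c -> 0 <= t < 1 ->
  hyp2F1 (c + b - 1) b c t = Rpower (1 - t) (1 - 2 * b) * hyp2F1 (c - b) (1 - b) c t.
Proof.
  intros Hc Hb Hbc Ht.
  rewrite hyp2F1_Euler by lra. rewrite (hyp2F1_sym (c - (c + b - 1))).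
  f_equal; [f_equal; ring | f_equal; ring].
Qed.

Lemma hyp2F1_contiguous_Euler_form c b t : 0 < c -> b < 1 -> b < c -> 0 <= t < 1 ->
  hyp2F1 (c + b) b (c + 1) t = Rpower (1 - t) (1 - 2 * b) * hyp2F1 (c - b + 1) (1 - b) (c + 1) t.
Proof.
  intros Hc Hb Hbc Ht.
  replace (c + b) with (c + 1 + b - 1) by ring. replace (c - b + 1) with (c + 1 - b) by ring.
  apply hyp2F1_Euler_contiguous; lra.
Qed.

Lemma hyp2F1_contiguous_lt a b c d t : 0 < d <= a -> d < c -> 0 < b -> 0 <= t < 1 ->
  d * hyp2F1 (a + 1) b (c + 1) t < c * hyp2F1 a b c t.
Proof.
  intros Hd Hdc Hb Ht.
  rewrite !hyp2F1_PSeries, <- !PSeries_scal.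
  apply PSeries_lt_termwise; [lra | | | ].
  - rewrite CV_radius_scal by lra. apply hypcoef_CV_radius; [lra | rewrite Rabs_right; lra].
  - intro r. unfold PS_scal, scal; simpl; unfold mult; simpl.
    pose proof (hypcoef_contiguous a b c r ltac:(lra)) as E.
    pose proof (hypcoef_pos (a + 1) b (c + 1) r ltac:(lra) Hb ltac:(lra)) as Hh.
    pose proof (hypcoef_pos a b c r ltac:(lra) Hb ltac:(lra)) as Hg.
    pose proof (pos_INR r) as Hr.
    split; [nra|].
    apply (Rmult_le_reg_r (a * (c + INR r))); [nra|].
    assert (Hda : d * (a + INR r) <= a * (c + INR r)) by nra.
    transitivity (d * (a + INR r) * (c * hypcoef a b c r)); [nra|].
    assert (0 < c * hypcoef a b c r) by nra. nra.
  - unfold PS_scal, scal; simpl; unfold mult; simpl. rewrite !hypcoef_0. lra.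
Qed.

Lemma hypcoef_log_concave_shift c b r : 1 <= c -> b <= 0 ->
  (hypcoef (c - b) (1 - b) c r * (c - b + INR r) / (c + INR r)) ^ 2
    <= hypcoef (c - b) (1 - b) c r * hypcoef (c - b) (1 - b) c (S r).
Proof.
  intros Hc Hb. rewrite (hypcoef_S _ _ _ r) by lra.
  pose proof (hypcoef_pos (c - b) (1 - b) c r ltac:(lra) ltac:(lra) ltac:(lra)).
  pose proof (pos_INR r).
  set (p := hypcoef (c - b) (1 - b) c r) in *. set (x := INR r) in *.
  assert (Hratio : (c - b + x) / (c + x) <= (1 - b + x) / (x + 1)).
  { assert (E : (1 - b + x) / (x + 1) - (c - b + x) / (c + x)
                = - b * (c - 1) / ((x + 1) * (c + x))) by (field; lra).
    assert (0 <= - b * (c - 1) / ((x + 1) * (c + x))) by (apply Rdiv_le_0_compat; nra).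
    lra. }
  assert (0 <= (c - b + x) / (c + x)) by (apply Rdiv_le_0_compat; lra).
  replace ((p * (c - b + x) / (c + x)) ^ 2)
    with (p ^ 2 * ((c - b + x) / (c + x) * ((c - b + x) / (c + x)))) by (field; lra).
  replace (p * (p * ((c - b + x) * (1 - b + x) / ((c + x) * (x + 1)))))
    with (p ^ 2 * ((c - b + x) / (c + x) * ((1 - b + x) / (x + 1)))) by (field; lra).
  apply Rmult_le_compat_l; [nra|]. apply Rmult_le_compat_l; lra.
Qed.

Lemma hyp2F1_contiguous_sqrt_lt c b t : 1 <= c -> b <= 0 -> 0 < t < 1 ->
  sqrt t * ((c - b) * hyp2F1 (c - b + 1) (1 - b) (c + 1) t) < c * hyp2F1 (c - b) (1 - b) c t.
Proof.
  intros Hc Hb Ht. rewrite !hyp2F1_PSeries.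
  set (p := hypcoef (c - b) (1 - b) c).
  set (w r := p r * (c - b + INR r) / (c + INR r)).
  assert (Hp : forall r, 0 < p r) by (intro r; apply hypcoef_pos; lra).
  assert (Hw : forall r, 0 <= w r).
  { intro r. pose proof (Hp r). pose proof (pos_INR r). unfold w.
    apply Rmult_le_pos; [nra | left; apply Rinv_0_lt_compat; lra]. }
  assert (HQ : (c - b) * PSeries (hypcoef (c - b + 1) (1 - b) (c + 1)) t = c * PSeries w t).
  { rewrite <- !PSeries_scal. apply PSeries_ext. intro r.
    pose proof (hypcoef_contiguous (c - b) (1 - b) c r ltac:(lra)) as E. pose proof (pos_INR r).
    unfold PS_scal, scal, w; simpl; unfold mult; simpl.
    apply (Rmult_eq_reg_r (c + INR r)); [|lra].
    transitivity (hypcoef (c - b + 1) (1 - b) (c + 1) r * (c - b) * (c + INR r)); [ring|].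
    rewrite E. fold p. field. lra. }
  assert (Hx : 0 < sqrt t) by (apply sqrt_lt_R0; lra).
  assert (Hxt : sqrt t ^ 2 = t) by (apply pow2_sqrt; lra).
  set (x := sqrt t) in *.
  assert (HW : x * PSeries w t <= PSeries p t - 1 / 2).
  { rewrite <- Hxt, <- (hypcoef_0 (c - b) (1 - b) c). apply PSeries_interlaced_le; auto.
    - lra.
    - rewrite Hxt. apply hypcoef_CV_radius; [lra | rewrite Rabs_right; lra].
    - intro r; left; apply Hp.
    - intro r. apply hypcoef_log_concave_shift; assumption. }
  rewrite HQ. nra.
Qed.

Lemma hyp2F1_sq_step c b t : 0 < b < c -> 0 <= t < 1 ->
  (c - b) ^ 2 * hyp2F1 (c + b) b (c + 1) t ^ 2 < c ^ 2 * hyp2F1 (c + b - 1) b c t ^ 2.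
Proof.
  intros Hb Ht.
  rewrite <- !Rpow_mult_distr. apply pow2_lt_compat.
  destruct (Rlt_or_le b 1) as [Hb1|Hb1].
  - rewrite hyp2F1_Euler_contiguous, hyp2F1_contiguous_Euler_form by lra.
    pose proof (hyp2F1_contiguous_lt (c - b) (1 - b) c (c - b) t
                  ltac:(lra) ltac:(lra) ltac:(lra) Ht).
    pose proof (hyp2F1_pos (c - b + 1) (1 - b) (c + 1) t ltac:(lra) ltac:(lra) ltac:(lra) Ht).
    assert (0 < Rpower (1 - t) (1 - 2 * b)) by apply exp_pos.
    split; [apply Rmult_le_pos|]; nra.
  - pose proof (hyp2F1_contiguous_lt (c + b - 1) b c (c - b) t ltac:(lra) ltac:(lra) ltac:(lra) Ht)
      as Hlt.
    replace (c + b - 1 + 1) with (c + b) in Hlt by ring.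
    pose proof (hyp2F1_pos (c + b) b (c + 1) t ltac:(lra) ltac:(lra) ltac:(lra) Ht).
    split; nra.
Qed.

Lemma hyp2F1_sq_step_weighted c b t : 1 <= c -> b <= 0 -> 0 < t < 1 ->
  t * (c - b) ^ 2 * hyp2F1 (c + b) b (c + 1) t ^ 2 < c ^ 2 * hyp2F1 (c + b - 1) b c t ^ 2.
Proof.
  intros Hc Hb Ht.
  rewrite hyp2F1_Euler_contiguous, hyp2F1_contiguous_Euler_form by lra.
  pose proof (hyp2F1_contiguous_sqrt_lt c b t Hc Hb Ht).
  pose proof (hyp2F1_pos (c - b + 1) (1 - b) (c + 1) t ltac:(lra) ltac:(lra) ltac:(lra) ltac:(lra)).
  assert (0 < Rpower (1 - t) (1 - 2 * b)) by apply exp_pos.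
  assert (0 < sqrt t) by (apply sqrt_lt_R0; lra).
  replace t with (sqrt t ^ 2) at 1 by (apply pow2_sqrt; lra).
  rewrite <- !Rpow_mult_distr. apply pow2_lt_compat.
  split; [left; repeat apply Rmult_lt_0_compat; lra | nra].
Qed.

(** * The Gamma function *)

Definition Gamma_integrand (x s : R) : R := Rpower s (x - 1) * exp (- s).

Lemma Gamma_integrand_pos x s : 0 < Gamma_integrand x s.
Proof. apply Rmult_lt_0_compat; apply exp_pos. Qed.

Lemma Gamma_integrand_continuous x s : 0 < s -> continuous (Gamma_integrand x) s.
Proof.
  intro Hs. apply (@ex_derive_continuous R_AbsRing R_NormedModule).
  unfold Gamma_integrand. eexists.
  apply (is_derive_mult (fun u => Rpower u (x - 1)) (fun u => exp (- u)));
    [apply is_derive_Rpower_base; exact Hs | | exact Rmult_comm].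
  auto_derive; [exact I | reflexivity].
Qed.

Lemma ex_RInt_Gamma_integrand x a b : 0 < a -> 0 < b -> ex_RInt (Gamma_integrand x) a b.
Proof.
  intros Ha Hb. apply (@ex_RInt_continuous R_CompleteNormedModule). intros z Hz.
  apply Gamma_integrand_continuous. pose proof (Rmin_pos a b Ha Hb). lra.
Qed.

Lemma Gamma_integrand_le_exp x :
  exists K, 0 < K /\ forall s, 1 <= s -> Gamma_integrand x s <= K * exp (- s / 2).
Proof.
  destruct (nfloor_ex (Rabs x) (Rabs_pos x)) as [N0 HN0].
  set (N := S N0).
  assert (HN : x - 1 <= INR N /\ 1 <= INR N).
  { unfold N. rewrite S_INR. pose proof (pos_INR N0). pose proof (Rle_abs x). lra. }
  exists ((2 * INR N) ^ N). split; [apply pow_lt; lra|].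
  intros s Hs. unfold Gamma_integrand.
  assert (H1 : Rpower s (x - 1) <= s ^ N).
  { rewrite <- Rpower_pow by lra. apply Rle_Rpower; lra. }
  assert (H2 : s / (2 * INR N) <= exp (s / (2 * INR N))).
  { assert (0 < s / (2 * INR N)) by (apply Rdiv_lt_0_compat; lra).
    pose proof (exp_ineq1 (s / (2 * INR N)) ltac:(lra)). lra. }
  assert (H3 : s ^ N <= (2 * INR N) ^ N * exp (s / 2)).
  { replace (exp (s / 2)) with (exp (s / (2 * INR N)) ^ N).
    2:{ rewrite <- Rpower_pow by apply exp_pos. unfold Rpower. rewrite ln_exp.
        f_equal. field. lra. }
    rewrite <- Rpow_mult_distr.
    replace s with (2 * INR N * (s / (2 * INR N))) at 1 by (field; lra).
    apply pow_incr. split; [apply Rmult_le_pos; [lra | left; apply Rdiv_lt_0_compat; lra]|].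
    apply Rmult_le_compat_l; lra. }
  replace (exp (- s / 2)) with (exp (s / 2) * exp (- s)) by (rewrite <- exp_plus; f_equal; field).
  pose proof (exp_pos (- s)).
  rewrite <- Rmult_assoc. apply Rmult_le_compat_r; lra.
Qed.

Lemma is_RInt_eq (f : R -> R) a b (l l' : R) : is_RInt f a b l -> @eq R l l' -> is_RInt f a b l'.
Proof. intros H <-; exact H. Qed.

Lemma is_RInt_Rpower x a b : 0 < x -> 0 < a -> 0 < b ->
  is_RInt (fun s => Rpower s (x - 1)) a b ((Rpower b x - Rpower a x) / x).
Proof.
  intros Hx Ha Hb. pose proof (Rmin_pos a b Ha Hb).
  apply (is_RInt_eq _ _ _ (minus (Rpower b x / x) (Rpower a x / x)));
    [| change (minus ?u ?v) with (u - v); field; lra].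
  apply (@is_RInt_derive R_CompleteNormedModule (fun u => Rpower u x / x)).
  - intros s Hs. apply (is_derive_eq _ _ (/ x * (x * Rpower s (x - 1)))); [|field; lra].
    apply (is_derive_ext (fun u => / x * Rpower u x)); [intro; unfold Rdiv; apply Rmult_comm|].
    apply (is_derive_scal (fun u => Rpower u x)). apply is_derive_Rpower_base. lra.
  - intros s Hs. apply (@ex_derive_continuous R_AbsRing R_NormedModule).
    eexists. apply is_derive_Rpower_base. lra.
Qed.

Lemma is_RInt_exp_half a b :
  is_RInt (fun s => exp (- s / 2)) a b (2 * exp (- a / 2) - 2 * exp (- b / 2)).
Proof.
  apply (is_RInt_eq _ _ _ (minus (- 2 * exp (- b / 2)) (- 2 * exp (- a / 2))));
    [| change (minus ?u ?v) with (u - v); ring].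
  apply (@is_RInt_derive R_CompleteNormedModule (fun u => - 2 * exp (- u / 2))).
  - intros s Hs. auto_derive; [exact I|]. unfold Rdiv. field.
  - intros s Hs. apply (@ex_derive_continuous R_AbsRing R_NormedModule). auto_derive. exact I.
Qed.

Lemma RInt_Gamma_integrand_near_0 x a a' : 0 < x -> 0 < a <= a' ->
  0 <= RInt (Gamma_integrand x) a a' <= Rpower a' x / x.
Proof.
  intros Hx Ha.
  pose proof (ex_RInt_Gamma_integrand x a a' ltac:(lra) ltac:(lra)) as Hex.
  split.
  - apply RInt_ge_0; [lra | exact Hex |]. intros; left; apply Gamma_integrand_pos.
  - pose proof (is_RInt_Rpower x a a' Hx ltac:(lra) ltac:(lra)) as HI.
    apply Rle_trans with ((Rpower a' x - Rpower a x) / x).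
    + rewrite <- (is_RInt_unique _ _ _ _ HI).
      apply RInt_le; [lra | exact Hex | eexists; exact HI |].
      intros s Hs. unfold Gamma_integrand. pose proof (exp_pos (- s)).
      assert (0 < Rpower s (x - 1)) by apply exp_pos.
      assert (exp (- s) <= 1) by (rewrite <- exp_0; left; apply exp_increasing; lra).
      nra.
    + assert (0 < Rpower a x) by apply exp_pos.
      unfold Rdiv. apply Rmult_le_compat_r; [left; apply Rinv_0_lt_compat|]; lra.
Qed.

Lemma RInt_Gamma_integrand_tail x K b b' :
  (forall s, 1 <= s -> Gamma_integrand x s <= K * exp (- s / 2)) -> 1 <= b <= b' ->
  0 <= RInt (Gamma_integrand x) b b' <= 2 * K * exp (- b / 2).
Proof.
  intros HK Hb.
  pose proof (ex_RInt_Gamma_integrand x b b' ltac:(lra) ltac:(lra)) as Hex.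
  split.
  - apply RInt_ge_0; [lra | exact Hex |]. intros; left; apply Gamma_integrand_pos.
  - pose proof (is_RInt_scal _ b b' K _ (is_RInt_exp_half b b')) as HI.
    apply Rle_trans with (RInt (fun s => K * exp (- s / 2)) b b').
    + apply RInt_le; [lra | exact Hex | eexists; exact HI |].
      intros s Hs. apply HK. lra.
    + rewrite (is_RInt_unique (fun s => K * exp (- s / 2)) b b' _ HI).
      change (scal K ?l) with (K * l).
      pose proof (Gamma_integrand_pos x b). pose proof (HK b (proj1 Hb)).
      pose proof (exp_pos (- b / 2)). pose proof (exp_pos (- b' / 2)).
      assert (0 <= K) by nra. nra.
Qed.

Lemma Rabs_RInt_ordered (f : R -> R) u v : ex_RInt f u v ->
  Rabs (RInt f u v) = Rabs (RInt f (Rmin u v) (Rmax u v)).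
Proof.
  intro Hex. unfold Rmin, Rmax. destruct (Rle_dec u v); [reflexivity|].
  rewrite <- (opp_RInt_swap f u v Hex). change (opp ?y) with (- y). symmetry; apply Rabs_Ropp.
Qed.

Lemma Rabs_RInt_Gamma_integrand_near_0 x a1 a2 d : 0 < x -> 0 < a1 < d -> 0 < a2 < d ->
  Rabs (RInt (Gamma_integrand x) a1 a2) <= Rpower d x / x.
Proof.
  intros Hx H1 H2.
  rewrite Rabs_RInt_ordered by (apply ex_RInt_Gamma_integrand; lra).
  assert (Hm : 0 < Rmin a1 a2 <= Rmax a1 a2)
    by (split; [apply Rmin_glb_lt; lra | apply Rmin_Rmax]).
  pose proof (Rmax_lub_lt a1 a2 d (proj2 H1) (proj2 H2)).
  destruct (RInt_Gamma_integrand_near_0 x _ _ Hx Hm) as [Hlo Hhi].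
  rewrite Rabs_right by lra. apply (Rle_trans _ _ _ Hhi).
  unfold Rdiv. apply Rmult_le_compat_r; [left; apply Rinv_0_lt_compat; lra|].
  apply Rle_Rpower_l; lra.
Qed.

Lemma Rabs_RInt_Gamma_integrand_tail x K b1 b2 M :
  (forall s, 1 <= s -> Gamma_integrand x s <= K * exp (- s / 2)) ->
  1 <= M -> M < b1 -> M < b2 ->
  Rabs (RInt (Gamma_integrand x) b1 b2) <= 2 * K * exp (- M / 2).
Proof.
  intros HK HM H1 H2.
  rewrite Rabs_RInt_ordered by (apply ex_RInt_Gamma_integrand; lra).
  pose proof (Rmin_glb_lt b1 b2 M H1 H2).
  assert (Hm : 1 <= Rmin b1 b2 <= Rmax b1 b2) by (split; [lra | apply Rmin_Rmax]).
  destruct (RInt_Gamma_integrand_tail x K _ _ HK Hm) as [Hlo Hhi].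
  rewrite Rabs_right by lra. apply (Rle_trans _ _ _ Hhi).
  pose proof (Gamma_integrand_pos x M). pose proof (HK M HM).
  pose proof (exp_pos (- M / 2)).
  assert (0 <= K) by nra.
  assert (exp (- Rmin b1 b2 / 2) <= exp (- M / 2)) by (left; apply exp_increasing; lra).
  nra.
Qed.

Lemma exp_tail_small K e : 0 < K -> 0 < e ->
  exists M, 1 <= M /\ 2 * K * exp (- M / 2) <= e.
Proof.
  intros HK He. set (M := Rmax 1 (- 2 * ln (e / (2 * K))) + 1).
  pose proof (Rmax_l 1 (- 2 * ln (e / (2 * K)))). pose proof (Rmax_r 1 (- 2 * ln (e / (2 * K)))).
  exists M. split; [unfold M; lra|].
  assert (HM : exp (- M / 2) <= e / (2 * K)).
  { rewrite <- (exp_ln (e / (2 * K))) by (apply Rdiv_lt_0_compat; lra).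
    left. apply exp_increasing. unfold M. lra. }
  apply (Rmult_le_compat_l (2 * K)) in HM; [|lra].
  replace (2 * K * (e / (2 * K))) with e in HM by (field; lra). lra.
Qed.

Lemma filter_prod_at_right_0_p_infty (d M : R) (P : R * R -> Prop) : 0 < d ->
  (forall a b, 0 < a < d -> M < b -> P (a, b)) ->
  filter_prod (at_right 0) (Rbar_locally p_infty) P.
Proof.
  intros Hd HP. apply (Filter_prod _ _ _ (fun a => 0 < a < d) (fun b => M < b)).
  - exists (mkposreal d Hd). intros y Hy Hy0. change (Rabs (y - 0) < d) in Hy.
    rewrite Rminus_0_r, Rabs_right in Hy; simpl in Hy; lra.
  - exists M. auto.
  - intros a b Ha Hb. apply HP; auto.
Qed.

Lemma ProperFilter_at_right_0_p_infty :
  ProperFilter (filter_prod (at_right 0) (Rbar_locally p_infty)).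
Proof.
  exact (@filter_prod_proper _ _ _ _ (at_right_proper_filter 0) (Rbar_locally_filter p_infty)).
Qed.

(* Cauchy criterion: the integrals over [(0, d)] and [(M, oo)] are uniformly small. *)
Lemma ex_RInt_gen_Gamma_integrand x : 0 < x ->
  exists L, is_RInt_gen (Gamma_integrand x) (at_right 0) (Rbar_locally p_infty) L.
Proof.
  intro Hx. set (f := Gamma_integrand x).
  destruct (Gamma_integrand_le_exp x) as [K [HK HKb]].
  assert (Hfun : filter_prod (at_right 0) (Rbar_locally p_infty)
    (fun ab => (exists y : R_CompleteSpace, is_RInt f (fst ab) (snd ab) y) /\
       (forall y1 y2 : R_CompleteSpace,
          is_RInt f (fst ab) (snd ab) y1 -> is_RInt f (fst ab) (snd ab) y2 -> y1 = y2))).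
  { apply (filter_prod_at_right_0_p_infty 1 0); [lra|]. intros a b Ha Hb. simpl. split.
    - exists (RInt f a b).
      apply (@RInt_correct R_CompleteNormedModule), ex_RInt_Gamma_integrand; lra.
    - intros y1 y2 E1 E2. rewrite <- (is_RInt_unique _ _ _ _ E1). apply is_RInt_unique, E2. }
  apply (proj1 (@filterlimi_locally_cauchy _ _ _ ProperFilter_at_right_0_p_infty _ Hfun)).
  intros [e He]. simpl.
  set (d := Rpower (x * e / 4) (/ x)).
  assert (Hd : 0 < d) by apply exp_pos.
  assert (Hdx : Rpower d x / x = e / 4).
  { unfold d. rewrite Rpower_mult. replace (/ x * x) with 1 by (field; lra).
    rewrite Rpower_1 by nra. field. lra. }
  destruct (exp_tail_small K (e / 4) HK ltac:(lra)) as [M [HM1 HMe]].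
  exists (fun ab => 0 < fst ab < d /\ M < snd ab). split.
  - apply (filter_prod_at_right_0_p_infty d M); auto.
  - intros [a1 b1] [a2 b2] [Ha1 Hb1] [Ha2 Hb2] u v Hu Hv. simpl in *.
    apply (@is_RInt_unique R_CompleteNormedModule) in Hu, Hv. subst u v.
    change (Rabs (RInt f a2 b2 - RInt f a1 b1) < e).
    replace (RInt f a2 b2 - RInt f a1 b1) with (RInt f a2 a1 + RInt f b1 b2).
    2:{ rewrite <- (RInt_Chasles f a2 b1 b2), <- (RInt_Chasles f a2 a1 b1)
          by (apply ex_RInt_Gamma_integrand; lra).
        unfold plus; simpl. ring. }
    pose proof (Rabs_RInt_Gamma_integrand_near_0 x a2 a1 d Hx Ha2 Ha1).
    pose proof (Rabs_RInt_Gamma_integrand_tail x K b1 b2 M HKb HM1 Hb1 Hb2).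
    eapply Rle_lt_trans; [apply Rabs_triang|]. unfold f. lra.
Qed.

Lemma Gamma_of_is_RInt_gen x L :
  is_RInt_gen (Gamma_integrand x) (at_right 0) (Rbar_locally p_infty) L -> Gamma x = L.
Proof. intro H. exact (is_RInt_gen_unique (Gamma_integrand x) L H). Qed.

Lemma Gamma_pos x : 0 < x -> 0 < Gamma x.
Proof.
  intro Hx. destruct (ex_RInt_gen_Gamma_integrand x Hx) as [L HL].
  rewrite (Gamma_of_is_RInt_gen x L HL).
  set (f := Gamma_integrand x).
  set (m := RInt f 1 2).
  assert (Hm : 0 < m).
  { apply RInt_gt_0; [lra | intros; apply Gamma_integrand_pos |].
    intros; apply Gamma_integrand_continuous; lra. }
  assert (Hnear : filter_prod (at_right 0) (Rbar_locally p_infty)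
    (fun ab => (exists z : R, is_RInt f (fst ab) (snd ab) z /\ ball L m z)
               /\ (0 < fst ab < 1 /\ 2 < snd ab))).
  { apply filter_and; [exact (proj1 (filterlimi_locally _ L) HL (mkposreal m Hm))|].
    apply (filter_prod_at_right_0_p_infty 1 2); [lra|]. intros; simpl; auto. }
  destruct (@filter_ex _ _ ProperFilter_at_right_0_p_infty _ Hnear)
    as [[a b] [[z [Hz Hball]] [Ha Hb]]]. simpl in *.
  apply (@is_RInt_unique R_CompleteNormedModule) in Hz. subst z.
  change (Rabs (RInt f a b - L) < m) in Hball.
  assert (E : RInt f a b = RInt f a 1 + m + RInt f 2 b).
  { unfold m. rewrite <- (RInt_Chasles f a 2 b), <- (RInt_Chasles f a 1 2)
      by (apply ex_RInt_Gamma_integrand; lra).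
    reflexivity. }
  assert (0 <= RInt f a 1).
  { apply RInt_ge_0; [lra | apply ex_RInt_Gamma_integrand; lra |].
    intros; left; apply Gamma_integrand_pos. }
  assert (0 <= RInt f 2 b).
  { apply RInt_ge_0; [lra | apply ex_RInt_Gamma_integrand; lra |].
    intros; left; apply Gamma_integrand_pos. }
  pose proof (Rle_abs (RInt f a b - L)). lra.
Qed.

Definition Gamma_parts (x s : R) : R := - (Rpower s x * exp (- s)).

Lemma Gamma_parts_derive x s : 0 < s ->
  is_derive (Gamma_parts x) s (Gamma_integrand (x + 1) s - x * Gamma_integrand x s).
Proof.
  intro Hs. unfold Gamma_parts, Gamma_integrand. replace (x + 1 - 1) with x by ring.
  assert (Hexp : is_derive (fun u => exp (- u)) s (- exp (- s))) by (auto_derive; [exact I | ring]).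
  pose proof (is_derive_opp _ _ _
    (is_derive_mult _ _ s _ _ (is_derive_Rpower_base s x Hs) Hexp Rmult_comm)) as H.
  apply (is_derive_eq _ _ _ _ H). unfold opp, plus, mult; simpl. ring.
Qed.

Lemma Gamma_parts_lim_0 x : 0 < x -> filterlim (Gamma_parts x) (at_right 0) (locally 0).
Proof.
  intro Hx. apply filterlim_locally. intros [e He].
  exists (mkposreal (Rpower e (/ x)) (exp_pos _)). intros s Hs Hs0.
  change (Rabs (s - 0) < Rpower e (/ x)) in Hs. rewrite Rminus_0_r, Rabs_right in Hs by lra.
  change (Rabs (Gamma_parts x s - 0) < e). rewrite Rminus_0_r. unfold Gamma_parts.
  rewrite Rabs_Ropp. pose proof (exp_pos (- s)). assert (0 < Rpower s x) by apply exp_pos.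
  rewrite Rabs_right by nra.
  assert (Rpower s x < e).
  { replace e with (Rpower (Rpower e (/ x)) x) at 1.
    - apply Rlt_Rpower_l; lra.
    - rewrite Rpower_mult. replace (/ x * x) with 1 by (field; lra). apply Rpower_1, He. }
  assert (exp (- s) <= 1) by (rewrite <- exp_0; left; apply exp_increasing; lra).
  nra.
Qed.

Lemma Gamma_parts_lim_p_infty x : filterlim (Gamma_parts x) (Rbar_locally p_infty) (locally 0).
Proof.
  destruct (Gamma_integrand_le_exp (x + 1)) as [K [HK HKb]].
  apply filterlim_locally. intros [e He].
  destruct (exp_tail_small K e HK He) as [M [HM1 HMe]].
  exists M. intros s Hs.
  change (Rabs (Gamma_parts x s - 0) < e). rewrite Rminus_0_r. unfold Gamma_parts.
  rewrite Rabs_Ropp.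
  specialize (HKb s ltac:(lra)). unfold Gamma_integrand in HKb.
  replace (x + 1 - 1) with x in HKb by ring.
  pose proof (exp_pos (- s)). assert (0 < Rpower s x) by apply exp_pos.
  rewrite Rabs_right by nra.
  assert (exp (- s / 2) < exp (- M / 2)) by (apply exp_increasing; lra).
  pose proof (exp_pos (- M / 2)). nra.
Qed.

(* Integration by parts against [Gamma_parts x], whose boundary values vanish. *)
Lemma Gamma_succ x : 0 < x -> Gamma (x + 1) = x * Gamma x.
Proof.
  intro Hx.
  destruct (ex_RInt_gen_Gamma_integrand x Hx) as [L0 H0].
  destruct (ex_RInt_gen_Gamma_integrand (x + 1) ltac:(lra)) as [L1 H1].
  rewrite (Gamma_of_is_RInt_gen _ _ H0), (Gamma_of_is_RInt_gen _ _ H1).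
  pose proof (is_RInt_gen_minus _ _ _ _ H1 (is_RInt_gen_scal _ x _ H0)) as Hdiff.
  assert (Hpos : forall P : R * R -> Prop, (forall a b, 0 < a -> 0 < b -> P (a, b)) ->
            filter_prod (at_right 0) (Rbar_locally p_infty) P).
  { intros P HP. apply (filter_prod_at_right_0_p_infty 1 0); [lra|]. intros; apply HP; lra. }
  assert (Hparts :
    is_RInt_gen (Derive (Gamma_parts x)) (at_right 0) (Rbar_locally p_infty) (0 - 0)).
  { apply is_RInt_gen_Derive.
    - apply Hpos. intros a b Ha Hb s Hs. simpl in Hs. pose proof (Rmin_pos a b Ha Hb).
      eexists. apply Gamma_parts_derive. lra.
    - apply Hpos. intros a b Ha Hb s Hs. simpl in Hs. pose proof (Rmin_pos a b Ha Hb).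
      apply (continuous_ext_loc _ (fun u => Gamma_integrand (x + 1) u - x * Gamma_integrand x u)).
      + exists (mkposreal s ltac:(lra)). intros y Hy. change (Rabs (y - s) < s) in Hy.
        symmetry. apply is_derive_unique, Gamma_parts_derive. apply Rabs_def2 in Hy. lra.
      + apply (continuous_minus (Gamma_integrand (x + 1)) (fun u => x * Gamma_integrand x u)).
        * apply Gamma_integrand_continuous. lra.
        * apply (continuous_scal_r x (Gamma_integrand x)), Gamma_integrand_continuous. lra.
    - apply Gamma_parts_lim_0, Hx.
    - apply Gamma_parts_lim_p_infty. }
  apply (is_RInt_gen_ext _
    (fun u => minus (Gamma_integrand (x + 1) u) (scal x (Gamma_integrand x u)))) in Hparts.
  2:{ apply Hpos. intros a b Ha Hb s Hs. simpl in Hs. pose proof (Rmin_pos a b Ha Hb).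
      apply is_derive_unique, Gamma_parts_derive. lra. }
  pose proof (is_RInt_gen_unique _ _ Hdiff) as E1. pose proof (is_RInt_gen_unique _ _ Hparts) as E2.
  assert (E : minus L1 (scal x L0) = 0 - 0) by (rewrite <- E1, <- E2; reflexivity).
  change (L1 - x * L0 = 0 - 0) in E. lra.
Qed.

(** * Monotonicity in [l] *)

Lemma Gamma_sq_ratio_succ_lt c b T1 T0 : 0 < c - b -> 0 < c ->
  (c - b) ^ 2 * T1 < c ^ 2 * T0 ->
  Gamma (c - b + 1) ^ 2 / Gamma (c + 1) ^ 2 * T1 < Gamma (c - b) ^ 2 / Gamma c ^ 2 * T0.
Proof.
  intros Hcb Hc H.
  rewrite !Gamma_succ by lra.
  pose proof (Gamma_pos (c - b) Hcb). pose proof (Gamma_pos c Hc).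
  set (r := Gamma (c - b) ^ 2 / (Gamma c ^ 2 * c ^ 2)).
  assert (Hr : 0 < r) by (apply Rdiv_lt_0_compat; [|apply Rmult_lt_0_compat]; nra).
  replace (((c - b) * Gamma (c - b)) ^ 2 / (c * Gamma c) ^ 2 * T1) with (r * ((c - b) ^ 2 * T1))
    by (unfold r; field; lra).
  replace (Gamma (c - b) ^ 2 / Gamma c ^ 2 * T0) with (r * (c ^ 2 * T0))
    by (unfold r; field; lra).
  apply Rmult_lt_compat_l; assumption.
Qed.

Lemma strictly_decreasing_of_succ (u : nat -> R) : (forall l, u (S l) < u l) ->
  forall l1 l2, (l1 < l2)%nat -> u l2 < u l1.
Proof.
  intros H l1 l2 Hl. induction l2 as [|l2 IH]; [lia|].
  destruct (Nat.eq_dec l1 l2) as [->|Hne]; [apply H|].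
  specialize (IH ltac:(lia)). specialize (H l2). lra.
Qed.

Definition gamma_hyp_term (N alpha t : R) (l : nat) : R :=
  Gamma (INR l + (N - alpha) / 2) ^ 2 / Gamma (INR l + N / 2) ^ 2
    * hyp2F1 (INR l + (N + alpha) / 2 - 1) (alpha / 2) (INR l + N / 2) t ^ 2.

Definition gamma_hyp_term_weighted (N alpha t : R) (l : nat) : R :=
  Gamma (INR l + (N - alpha) / 2) ^ 2 / Gamma (INR l + N / 2) ^ 2
    * t ^ l
    * hyp2F1 (INR l + (N + alpha) / 2 - 1) (alpha / 2) (INR l + N / 2) t ^ 2.

Lemma gamma_hyp_term_succ_lt N alpha t l : 0 < alpha < N -> 0 <= t < 1 ->
  gamma_hyp_term N alpha t (S l) < gamma_hyp_term N alpha t l.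
Proof.
  intros Ha Ht. unfold gamma_hyp_term. rewrite S_INR.
  pose proof (pos_INR l).
  set (c := INR l + N / 2). set (b := alpha / 2).
  replace (INR l + 1 + (N - alpha) / 2) with (c - b + 1) by (unfold c, b; field).
  replace (INR l + 1 + N / 2) with (c + 1) by (unfold c; field).
  replace (INR l + 1 + (N + alpha) / 2 - 1) with (c + b) by (unfold c, b; field).
  replace (INR l + (N - alpha) / 2) with (c - b) by (unfold c, b; field).
  replace (INR l + (N + alpha) / 2 - 1) with (c + b - 1) by (unfold c, b; field).
  apply Gamma_sq_ratio_succ_lt; [unfold c, b; lra | unfold c; lra |].
  apply hyp2F1_sq_step; [unfold c, b; lra | exact Ht].
Qed.

Lemma gamma_hyp_term_weighted_succ_lt N alpha t l : 2 <= N -> alpha <= 0 -> 0 < t < 1 ->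
  gamma_hyp_term_weighted N alpha t (S l) < gamma_hyp_term_weighted N alpha t l.
Proof.
  intros HN Ha Ht. unfold gamma_hyp_term_weighted. rewrite S_INR.
  pose proof (pos_INR l). pose proof (pow_lt t l (proj1 Ht)).
  set (c := INR l + N / 2). set (b := alpha / 2).
  replace (INR l + 1 + (N - alpha) / 2) with (c - b + 1) by (unfold c, b; field).
  replace (INR l + 1 + N / 2) with (c + 1) by (unfold c; field).
  replace (INR l + 1 + (N + alpha) / 2 - 1) with (c + b) by (unfold c, b; field).
  replace (INR l + (N - alpha) / 2) with (c - b) by (unfold c, b; field).
  replace (INR l + (N + alpha) / 2 - 1) with (c + b - 1) by (unfold c, b; field).
  rewrite !Rmult_assoc. change (t ^ S l) with (t * t ^ l).
  apply Gamma_sq_ratio_succ_lt; [unfold c, b; lra | unfold c; lra |].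
  pose proof (hyp2F1_sq_step_weighted c b t ltac:(unfold c; lra) ltac:(unfold b; lra) Ht).
  nra.
Qed.

Theorem lemma2p5 (n : nat) (t : R) :
  (3 <= n)%nat -> 0 < t < 1 ->
  (forall alpha : R, 0 < alpha < INR n ->
     forall l1 l2 : nat, (l1 < l2)%nat ->
       (Gamma (INR l2 + (INR n - alpha) / 2) ^ 2 / Gamma (INR l2 + INR n / 2) ^ 2)
         * hyp2F1 (INR l2 + (INR n + alpha) / 2 - 1) (alpha / 2) (INR l2 + INR n / 2) t ^ 2
       <
       (Gamma (INR l1 + (INR n - alpha) / 2) ^ 2 / Gamma (INR l1 + INR n / 2) ^ 2)
         * hyp2F1 (INR l1 + (INR n + alpha) / 2 - 1) (alpha / 2) (INR l1 + INR n / 2) t ^ 2)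
  /\
  (forall alpha : R, alpha <= 0 ->
     forall l1 l2 : nat, (l1 < l2)%nat ->
       (Gamma (INR l2 + (INR n - alpha) / 2) ^ 2 / Gamma (INR l2 + INR n / 2) ^ 2)
         * t ^ l2
         * hyp2F1 (INR l2 + (INR n + alpha) / 2 - 1) (alpha / 2) (INR l2 + INR n / 2) t ^ 2
       <
       (Gamma (INR l1 + (INR n - alpha) / 2) ^ 2 / Gamma (INR l1 + INR n / 2) ^ 2)
         * t ^ l1
         * hyp2F1 (INR l1 + (INR n + alpha) / 2 - 1) (alpha / 2) (INR l1 + INR n / 2) t ^ 2).
Proof.
  intros Hn Ht.
  assert (HN : 2 <= INR n) by (apply (le_INR 2); lia).
  split; intros alpha Ha.
  - apply (strictly_decreasing_of_succ (gamma_hyp_term (INR n) alpha t)).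
    intro l. apply gamma_hyp_term_succ_lt; lra.
  - apply (strictly_decreasing_of_succ (gamma_hyp_term_weighted (INR n) alpha t)).
    intro l. apply gamma_hyp_term_weighted_succ_lt; lra.
Qed.
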